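(* Let $K$ be a field, $R=K[A,X]=K[a_1,\dots,a_{N_A},x_1,\dots,x_{N_X}]$, $\tau$ an $X$-elimination term-ordering on $R$, and $I$ an ideal of $R$. Throughout the execution of the algorithm CGS-Iter (described in the context) on input $I$, whenever an ideal $\mathfrak b\subseteq K[A]$ is added to the set VanishingToDo: (1) $\mathfrak b\not\supseteq\mathfrak z$ for every ideal $\mathfrak z$ in the current VanishingToDo; (2) $\mathfrak b\not\subseteq\mathfrak z$ for every ideal $\mathfrak z$ that has ever been listed in VanishingToDo; (3) VanishingToDo is minimalized, i.e. no ideal in it contains another ideal in it.
   Context: Notation. $K$ is a field with algebraic closure $\bar K$; $A=\{a_1,\dots,a_{N_A}\}$ are parameters and $X=\{x_1,\dots,x_{N_X}\}$ indeterminates. For an ideal $\mathfrak a\subseteq K[A]$, $\mathbb V(\mathfrak a)\subseteq\bar K^{N_A}$ denotes its zero set; ideals of $K[A]$ are regarded as their extensions in $K[A,X]$ when added to ideals of $K[A,X]$. A term-ordering $\tau$ on power-products of $K[A,X]$ is an $X$-elimination ordering if every power-product involving only the $a_i$ is smaller than every power-product involving some $x_j$; $\tau_X$ is its restriction to power-products in $X$. Viewing $f\in K[A,X]$ as an element of $K[A][X]$, $\mathrm{LPP}_X(f)\in K[X]$ is its $\tau_X$-greatest power-product in $X$ and $\mathrm{LC}_X(f)\in K[A]$ its coefficient. For finite $F\subseteq K[A,X]$, $\mathrm{MB}(F)$ is the minimal set of monomial generators of $\langle\mathrm{LPP}_X(f)\mid f\in F\rangle\subseteq K[X]$. ''Minimalized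 $S$'', for a finite set $S$ of ideals, denotes the set of inclusion-minimal members of $S$ (one copy of each). Algorithm CGS-Iter. Input: ideal $I\subseteq R$. 1. VanishingToDo $:=\{\langle0\rangle\}$ (set of ideals of $K[A]$); FinalCases $:=\emptyset$. 2. While VanishingToDo $\neq\emptyset$: 2.1 choose (arbitrarily) and remove one ideal $\mathfrak a$ from VanishingToDo; 2.2 $J:=I+\mathfrak a$; 2.3 compute a $\tau$-Gröbner basis $G$ of $J$; 2.4 $\mathfrak g:=J\cap K[A]$; 2.5 if $\mathbb V(\mathfrak a)\setminus\mathbb V(\mathfrak g)\neq\emptyset$: 2.5.1 append $(\mathbb V(\mathfrak a)\setminus\mathbb V(\mathfrak g),\{1\})$ to FinalCases; 2.5.2 if $\mathfrak g$ contains no ideal currently in VanishingToDo, append $\mathfrak g$ to VanishingToDo; 2.6 otherwise: 2.6.1 $M:=\mathrm{MB}(G\setminus K[A])$; 2.6.2 $G_M:=\{g\in G\mid\mathrm{LPP}_X(g)\in M\}$; 2.6.3 for each $t\in M$, $\mathfrak c_t:=\langle\mathrm{LC}_X(g)\mid g\in G,\ \mathrm{LPP}_X(g)=t\rangle\subseteq K[A]$; 2.6.4 append $\big(\mathbb V(\mathfrak g)\setminus\bigcup_{t\in M}\mathbb V(\mathfrak c_t),\ G_M\big)$ to FinalCases; 2.6.5 NewVanishing $:=$ minimalized $\{\mathfrak c_t+\mathfrak g\mid t\in M,\ \mathfrak c_t\not\subseteq\mathfrak g\}$; 2.6.6 for each $\mathfrak b$ in NewVanishing: if $\mathfrak b$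 contains no ideal currently in VanishingToDo, append $\mathfrak b$ to VanishingToDo. Output: FinalCases. *)

From mathcomp Require Import all_boot all_algebra.
From mathcomp.multinomials Require Import mpoly.
From Stdlib Require List.

Set Implicit Arguments.
Unset Strict Implicit.
Unset Printing Implicit Defensive.

Local Open Scope ring_scope.

(* Conventions: R = K[A,X] is {mpoly K[NA + NX]}; the variables with index
   i < NA are the parameters a_1..a_NA, those with index >= NA are the
   indeterminates x_1..x_NX.  Ideals (of R, and of K[A] viewed inside R)
   are represented as predicates on R. *)

Section CGS.

Variables (K : fieldType) (NA NX : nat).

Notation n := (NA + NX)%N.
Notation R := {mpoly K[n]}.
Notation mnT := 'X_{1..n}.

Definition pureA (m : mnT) : bool := [forall i : 'I_n, (NA <= i)%N ==> (m i == 0%N)].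

Definition mA (m : mnT) : mnT := [multinom (if (i < NA)%N then m i else 0%N) | i < n].
Definition mX (m : mnT) : mnT := [multinom (if (i < NA)%N then 0%N else m i) | i < n].

Definition term_order (le : rel mnT) : Prop :=
  [/\ reflexive le, transitive le, antisymmetric le, total le
    & (forall m1 m2 m3, le m1 m2 -> le (m1 + m3)%MM (m2 + m3)%MM)] /\
  (forall m, le 0%MM m).

Definition ltmo (le : rel mnT) (m1 m2 : mnT) : bool := le m1 m2 && (m1 != m2).

Definition X_elim (le : rel mnT) : Prop :=
  forall m1 m2 : mnT, pureA m1 -> ~~ pureA m2 -> ltmo le m1 m2.

(* the le-greatest element of a sequence (0 for the empty sequence) *)
Definition maxmo (le : rel mnT) (s : seq mnT) : mnT :=
  foldr (fun m acc => if le acc m then m else acc) 0%MM s.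

Definition LPP (le : rel mnT) (f : R) : mnT := maxmo le (msupp f).

Definition inKA (f : R) : bool := all pureA (msupp f).

(* viewing f in K[A][X]: its tau_X-greatest power-product in X and its
   coefficient in K[A] (the restriction tau_X of tau to power-products in
   X is tau itself on the monomials mX m) *)
Definition LPPX (le : rel mnT) (f : R) : mnT := maxmo le (map mX (msupp f)).
Definition LCX (le : rel mnT) (f : R) : R :=
  \sum_(m <- msupp f | mX m == LPPX le f) f@_m *: 'X_[mA m].

Definition subI (a b : R -> Prop) : Prop := forall p, a p -> b p.
Definition eqI (a b : R -> Prop) : Prop := forall p, a p <-> b p.

Definition is_ideal (S : R -> Prop) : Prop :=
  [/\ S 0, (forall p q, S p -> S q -> S (p + q)) & (forall r p, S p -> S (r * p))].

(* ideal generated by S in the subring of those elements satisfying Ring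
   (Ring = everything: ideal of R; Ring = inKA: ideal of K[A]) *)
Inductive gen_in (Ring : R -> Prop) (S : R -> Prop) : R -> Prop :=
| gen_base p : S p -> gen_in Ring S p
| gen_zero : gen_in Ring S 0
| gen_add p q : gen_in Ring S p -> gen_in Ring S q -> gen_in Ring S (p + q)
| gen_mul r p : Ring r -> gen_in Ring S p -> gen_in Ring S (r * p).

Definition genR (S : R -> Prop) : R -> Prop := gen_in (fun _ => True) S.
Definition genKA (S : R -> Prop) : R -> Prop := gen_in (fun r => inKA r) S.

Definition addR (I J : R -> Prop) : R -> Prop := genR (fun p => I p \/ J p).
Definition addKA (a b : R -> Prop) : R -> Prop := genKA (fun p => a p \/ b p).

Definition zeroI : R -> Prop := fun p => p = 0.

Definition is_GB (le : rel mnT) (J : R -> Prop) (G : seq R) : Prop :=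
  (forall g, g \in G -> g != 0 /\ J g) /\
  (forall f, J f -> f != 0 -> exists2 g, g \in G & (LPP le g <= LPP le f)%MM).

Variables (L : closedFieldType) (iota : {rmorphism K -> L}).

Definition extpt (v : 'I_NA -> L) : 'I_n -> L :=
  fun i => match split i with inl j => v j | inr _ => 0 end.

Definition evalA (v : 'I_NA -> L) (p : R) : L := (map_mpoly iota p).@[extpt v].

Definition inV (a : R -> Prop) (v : 'I_NA -> L) : Prop := forall p, a p -> evalA v p = 0.

Definition Vdiff_ne (a g : R -> Prop) : Prop := exists v, inV a v /\ ~ inV g v.

Variables (le : rel mnT) (I : R -> Prop).

Definition Jof (a : R -> Prop) : R -> Prop := addR I a.
Definition gof (a : R -> Prop) : R -> Prop := fun p => Jof a p /\ inKA p.

Definition MBof (G : seq R) : seq mnT :=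
  let T := map (LPPX le) [seq g <- G | ~~ inKA g] in
  undup [seq t <- T | ~~ has (fun t' => (t' <= t)%MM && (t' != t)) T].

Definition cof (G : seq R) (t : mnT) : R -> Prop :=
  genKA (fun p => exists2 g, g \in G & LPPX le g = t /\ p = LCX le g).

Definition candP (a : R -> Prop) (G : seq R) (b : R -> Prop) : Prop :=
  exists t, t \in MBof G /\ ~ subI (cof G t) (gof a) /\ b = addKA (cof G t) (gof a).

(* NV is (an enumeration, in some order, of) the minimalized set of the
   set of ideals P: the inclusion-minimal members, one copy of each *)
Definition minimalized (P : (R -> Prop) -> Prop) (NV : seq (R -> Prop)) : Prop :=
  [/\ (forall b, List.In b NV -> P b /\ (forall c, P c -> subI c b -> subI b c)),
      (forall c, P c -> (forall c', P c' -> subI c' c -> subI c c') ->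
                 exists b, List.In b NV /\ eqI b c)
    & (forall i j, (i < size NV)%N -> (j < size NV)%N -> i <> j ->
                 ~ eqI (nth (fun _ => False) NV i) (nth (fun _ => False) NV j))].

(* states of the execution:
   todo    = current content of VanishingToDo,
   hist    = every ideal that has ever been listed in VanishingToDo,
   pending = ideals still to be examined in the current step 2.5.2 / 2.6.6 *)
Record state := mkState {
  todo : seq (R -> Prop);
  hist : seq (R -> Prop);
  pending : seq (R -> Prop) }.

Definition init_state : state := mkState [:: zeroI] [:: zeroI] [::].

(* one elementary step of CGS-Iter (FinalCases, which does not influence
   VanishingToDo, is not recorded) *)
Inductive cgs_step : state -> state -> Prop :=
(* 2.1-2.5: choose and remove a, compute a GB G of J, case V(a)\V(g) <> {} *)
| step_case1 T1 a T2 H G :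
    is_GB le (Jof a) G ->
    Vdiff_ne a (gof a) ->
    cgs_step (mkState (T1 ++ a :: T2) H [::]) (mkState (T1 ++ T2) H [:: gof a])
(* 2.1-2.4, 2.6: otherwise, compute NewVanishing *)
| step_case2 T1 a T2 H G NV :
    is_GB le (Jof a) G ->
    ~ Vdiff_ne a (gof a) ->
    minimalized (candP a G) NV ->
    cgs_step (mkState (T1 ++ a :: T2) H [::]) (mkState (T1 ++ T2) H NV)
| step_add T H b P :
    ~ (exists z, List.In z T /\ subI z b) ->
    cgs_step (mkState T H (b :: P)) (mkState (T ++ [:: b]) (H ++ [:: b]) P)
| step_skip T H b P :
    (exists z, List.In z T /\ subI z b) ->
    cgs_step (mkState T H (b :: P)) (mkState T H P).

Inductive reachable : state -> Prop :=
| reach_init : reachable init_state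
| reach_step s s' : reachable s -> cgs_step s s' -> reachable s'.

End CGS.

From mathcomp Require Import all_boot all_algebra.
From mathcomp.multinomials Require Import mpoly.
From Stdlib Require List.

(* Every iteration removes an ideal a from VanishingToDo and schedules only
   ideals strictly containing a: g contains a and differs from it because
   V(a) \ V(g) is nonempty, and c_t + g strictly contains g because c_t is
   not contained in g.  Consequently the ideals of VanishingToDo stay
   maximal among all ideals ever listed: a listed ideal containing a
   scheduled one would contain the removed a, hence equal it, and then be
   contained in its strict superset.  Since b is appended only when it
   contains no ideal of VanishingToDo, the list remains an antichain. *)

Set Implicit Arguments.
Unset Strict Implicit.
Unset Printing Implicit Defensive.

Local Open Scope ring_scope.

Section OrderedPairs.

Variables (A : Type) (rel : A -> A -> Prop).

Lemma In_remove (l1 l2 : seq A) x y :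
  List.In y (l1 ++ l2) -> List.In y (l1 ++ x :: l2).
Proof. by rewrite !List.in_app_iff /= => -[]; auto. Qed.

Lemma In_nth (l : seq A) d i : (i < size l)%N -> List.In (nth d l i) l.
Proof. by elim: l i => [|y l IH] [|i] //= hi; [left | right; apply: IH]. Qed.

Lemma ForallOrdPairs_remove (l1 l2 : seq A) x :
  List.ForallOrdPairs rel (l1 ++ x :: l2) -> List.ForallOrdPairs rel (l1 ++ l2).
Proof.
elim: l1 => [|y l1 IH] /= h; inversion_clear h as [|? ? hy hl] => //.
constructor; last exact: IH.
apply/List.Forall_forall => z /(In_remove x).
exact: (proj1 (List.Forall_forall _ _) hy).
Qed.

Lemma ForallOrdPairs_rcons (l : seq A) x :
  List.ForallOrdPairs rel l -> (forall y, List.In y l -> rel y x) ->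
  List.ForallOrdPairs rel (l ++ [:: x]).
Proof.
elim: l => [|y l IH] h hx /=; first by do 2 constructor.
inversion_clear h as [|? ? hy hl]; constructor.
- by apply/List.Forall_app; split => //; constructor; [apply: hx; left|].
- by apply: IH => // z hz; apply: hx; right.
Qed.

Lemma ForallOrdPairs_nth (l : seq A) d i j :
  List.ForallOrdPairs rel l -> (i < j < size l)%N -> rel (nth d l i) (nth d l j).
Proof.
elim: l i j => [|y l IH] i j h /andP[hij hj] //.
inversion_clear h as [|? ? hy hl]; case: i j hij hj => [|i] [|j] //= hij hj.
- exact: (proj1 (List.Forall_forall _ _) hy _ (In_nth d hj)).
- by apply: IH hl _; rewrite -ltnS hij.
Qed.

End OrderedPairs.

Section ParameterPolynomials.

Variables (K : fieldType) (NA NX : nat).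
Notation R := {mpoly K[NA + NX]}.

Lemma pureAD (m1 m2 : 'X_{1..NA + NX}) : pureA m1 -> pureA m2 -> pureA (m1 + m2)%MM.
Proof.
move=> /forallP h1 /forallP h2; apply/forallP=> i; apply/implyP=> hi.
by rewrite mnmDE; move: (h1 i) (h2 i); rewrite hi /= => /eqP -> /eqP ->.
Qed.

Lemma inKA0 : inKA (0 : R).
Proof. by rewrite /inKA msupp0. Qed.

Lemma inKAD (p q : R) : inKA p -> inKA q -> inKA (p + q).
Proof.
move=> /allP hp /allP hq; apply/allP=> m /msuppD_le.
by rewrite mem_cat => /orP[/hp | /hq].
Qed.

Lemma inKAM (p q : R) : inKA p -> inKA q -> inKA (p * q).
Proof.
move=> /allP hp /allP hq; apply/allP=> m /msuppM_le /allpairsP[[m1 m2] /= [h1 h2 ->]].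
exact: pureAD (hp _ h1) (hq _ h2).
Qed.

Lemma inKA_scale_mA (c : K) (m : 'X_{1..NA + NX}) : inKA (c *: 'X_[mA m] : R).
Proof.
apply/allP=> m' /msuppZ_le; rewrite msuppX inE => /eqP ->.
by apply/forallP=> i; apply/implyP=> hi; rewrite mnmE ltnNge hi.
Qed.

Lemma inKA_LCX (le : rel 'X_{1..NA + NX}) (g : R) : inKA (LCX le g).
Proof.
rewrite /LCX; elim/big_ind: _ => [|x y|m _].
- exact: inKA0.
- exact: inKAD.
- exact: inKA_scale_mA.
Qed.

Lemma genKA_inKA (S : R -> Prop) :
  (forall p, S p -> inKA p) -> forall p, genKA S p -> inKA p.
Proof.
move=> hS p; elim=> [q /hS // | | q r _ hq _ hr | r q hr _ hq].
- exact: inKA0.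
- exact: inKAD hq hr.
- exact: inKAM hr hq.
Qed.

End ParameterPolynomials.

Section Execution.

Variables (K : fieldType) (NA NX : nat) (L : closedFieldType).
Variables (iota : {rmorphism K -> L}) (le : rel 'X_{1..NA + NX}).
Variable I : {mpoly K[NA + NX]} -> Prop.

Notation R := {mpoly K[NA + NX]}.
Notation ideal := (R -> Prop).
Notation KA := (fun p : R => is_true (inKA p)).

Lemma subI_gof (a : ideal) : subI a KA -> subI a (gof I a).
Proof. by move=> aKA p ap; split; [apply: gen_base; right | exact: aKA]. Qed.

Lemma Vdiff_ne_not_subI (a g : ideal) : Vdiff_ne iota a g -> ~ subI g a.
Proof. by move=> [v [va vg]] ga; apply: vg => p /ga /va. Qed.

Lemma candP_strict (a : ideal) G b :
  subI a KA -> candP le I a G b -> subI a b /\ ~ subI b a.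
Proof.
move=> aKA [t [_ [cg ->]]]; split.
  by move=> p /(subI_gof aKA) gp; apply: gen_base; right.
by move=> ba; apply: cg => p cp; apply/(subI_gof aKA)/ba/gen_base; left.
Qed.

Lemma candP_subKA (a : ideal) G b : candP le I a G b -> subI b KA.
Proof.
move=> [t [_ [_ ->]]]; apply: genKA_inKA => p [|[_ //]].
by apply: genKA_inKA => q [g _ [_ ->]]; apply: inKA_LCX.
Qed.

Record invariant (s : state K NA NX) : Prop := {
  todo_listed : forall y, List.In y (todo s) -> List.In y (hist s);
  todo_maximal : forall y z, List.In y (todo s) -> List.In z (hist s) ->
    subI y z -> subI z y;
  pending_maximal : forall p z, List.In p (pending s) -> List.In z (hist s) ->
    subI p z -> List.In z (todo s) /\ subI z p;
  pending_minimalized : forall p q, List.In p (pending s) -> List.In q (pending s) ->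
    subI p q -> subI q p;
  todo_subKA : forall y, List.In y (todo s) -> subI y KA;
  pending_subKA : forall p, List.In p (pending s) -> subI p KA;
  todo_no_later_superset : List.ForallOrdPairs (fun y z => ~ subI y z) (todo s) }.

Lemma invariant_init : invariant (init_state K NA NX).
Proof.
split=> //= [y z [<-|[]] [<-|[]] // | y [<-|[]] p -> | ]; first exact: inKA0.
by do 2 constructor.
Qed.

Lemma invariant_remove T1 a T2 H NV :
  invariant (mkState (T1 ++ a :: T2) H [::]) ->
  (forall b, List.In b NV -> subI a b /\ ~ subI b a) ->
  (forall b c, List.In b NV -> List.In c NV -> subI b c -> subI c b) ->
  (forall b, List.In b NV -> subI b KA) ->
  invariant (mkState (T1 ++ T2) H NV).
Proof.
move=> [/= listed maximal _ _ subKA _ ordered] strict minimal NVsubKA.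
split=> //= [y yT | y z yT | p z pNV zH pz | y yT | ].
- exact: listed (In_remove _ yT).
- exact: maximal (In_remove _ yT).
- have [ap pa] := strict p pNV.
  have za : subI z a := maximal a z (List.in_elt _ _ _) zH (fun r ar => pz r (ap r ar)).
  by exfalso; apply: pa => q /pz /za.
- exact: subKA (In_remove _ yT).
- exact: ForallOrdPairs_remove ordered.
Qed.

Lemma added_not_below_listed T H b P :
  invariant (mkState T H (b :: P)) -> ~ (exists z, List.In z T /\ subI z b) ->
  forall z, List.In z H -> ~ subI b z.
Proof.
move=> inv hb z zH bz.
have [zT zb] := pending_maximal inv (or_introl erefl) zH bz.
by apply: hb; exists z.
Qed.

Lemma invariant_add T H b P :
  invariant (mkState T H (b :: P)) -> ~ (exists z, List.In z T /\ subI z b) ->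
  invariant (mkState (T ++ [:: b]) (H ++ [:: b]) P).
Proof.
move=> inv hb; have bH := added_not_below_listed inv hb.
have bT z : List.In z T -> ~ subI z b by move=> zT zb; apply: hb; exists z.
have inS (l : seq ideal) y : List.In y (l ++ [:: b]) -> List.In y l \/ y = b.
  by rewrite List.in_app_iff /= => -[|[|[]]]; auto.
have bS (l : seq ideal) : List.In b (l ++ [:: b]) by apply/List.in_app_iff; right; left.
have lS (l : seq ideal) y : List.In y l -> List.In y (l ++ [:: b]).
  by move=> yl; apply/List.in_app_iff; left.
case: inv => /= listed maximal pmax pmin subKA psubKA ordered.
split=> /=.
- by move=> y /inS [/listed/lS | ->].
- move=> y z /inS [yT | ->] /inS [zH | ->] //.
  + exact: maximal.
  + by move/(bT _ yT).
  + by move/(bH _ zH).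
- move=> p z pP /inS [zH | ->] pz.
  + by have [zT zp] := pmax p z (or_intror pP) zH pz; split; first exact: lS.
  + by split; [exact: bS | exact: pmin (or_intror pP) (or_introl erefl) pz].
- by move=> p q pP qP; apply: pmin; right.
- by move=> y /inS [/subKA | ->] //; apply: psubKA; left.
- by move=> p pP; apply: psubKA; right.
- exact: ForallOrdPairs_rcons.
Qed.

Lemma invariant_step s s' : invariant s -> cgs_step iota le I s s' -> invariant s'.
Proof.
move=> inv step; case: step inv
  => [T1 a T2 H G _ Va | T1 a T2 H G NV _ _ [candNV _ _] | T H b P hb | T H b P _] inv.
- have aKA := todo_subKA inv (List.in_elt _ _ _).
  apply: (invariant_remove inv)
    => [b [<-|[]] | b c [<-|[]] [<-|[]] // | b [<-|[]] p []//].
  by split; [exact: subI_gof | exact: Vdiff_ne_not_subI Va].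
- have aKA := todo_subKA inv (List.in_elt _ _ _).
  apply: (invariant_remove inv)
    => [b /candNV[cand _] | b c bNV /candNV[_ minc] | b /candNV[cand _]].
  + exact: candP_strict aKA cand.
  + exact: minc (proj1 (candNV b bNV)).
  + exact: candP_subKA cand.
- exact: invariant_add.
- case: inv => /= listed maximal pmax pmin subKA psubKA ordered.
  by split=> //= [p z pP | p q pP qP | p pP]; [apply: pmax | apply: pmin | apply: psubKA];
    right.
Qed.

Lemma invariant_reachable s : reachable iota le I s -> invariant s.
Proof. by elim=> [|s0 s1 _ inv]; [exact: invariant_init | exact: invariant_step]. Qed.

Definition antichain (l : seq ideal) : Prop :=
  forall i j, (i < size l)%N -> (j < size l)%N -> i <> j ->
  ~ subI (nth (fun _ => False) l i) (nth (fun _ => False) l j).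

Lemma invariant_todo_antichain s : invariant s -> antichain (todo s).
Proof.
case=> listed maximal _ _ _ _ ordered i j hi hj /eqP; rewrite neq_ltn => /orP[ij | ji].
- by apply: ForallOrdPairs_nth ordered _; rewrite ij.
- move=> sub; apply: (ForallOrdPairs_nth _ ordered (i := j) (j := i)); first by rewrite ji.
  exact: maximal (In_nth _ hi) (listed _ (In_nth _ hj)) sub.
Qed.

End Execution.

Theorem theorem4 (K : fieldType) (NA NX : nat)
    (L : closedFieldType) (iota : {rmorphism K -> L})
    (* L is an algebraic closure of K (via iota) *)
    (Lalg : forall x : L, exists2 p : {poly K}, p != 0 & root (map_poly iota p) x)
    (le : rel 'X_{1..NA + NX}) (Hterm : term_order le) (Helim : X_elim le)
    (I : {mpoly K[NA + NX]} -> Prop) (HI : is_ideal I)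
    (T H : seq ({mpoly K[NA + NX]} -> Prop)) (b : {mpoly K[NA + NX]} -> Prop)
    (P : seq ({mpoly K[NA + NX]} -> Prop)) :
  reachable iota le I (mkState T H (b :: P)) ->
  (* b is added to VanishingToDo at this point *)
  ~ (exists z, List.In z T /\ subI z b) ->
  [/\ (* (1) *) (forall z, List.In z T -> ~ subI z b),
      (* (2) *) (forall z, List.In z H -> ~ subI b z)
    & (* (3) *) (forall i j, (i < size (T ++ [:: b]))%N -> (j < size (T ++ [:: b]))%N ->
         i <> j ->
         ~ subI (nth (fun _ => False) (T ++ [:: b]) i) (nth (fun _ => False) (T ++ [:: b]) j))].
Proof.
move=> reach hb; have inv := invariant_reachable reach.
split.
- by move=> z zT zb; apply: hb; exists z.
- exact: added_not_below_listed inv hb.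
- exact: invariant_todo_antichain (invariant_add inv hb).
Qed.
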